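(* Let $U$ be a Hilbert space, $H: U\rightrightarrows U$ with $H^{-1}(0)\neq\emptyset$, and for each $i\in\mathbb{N}$ let $\widetilde H_{i+1}: U\rightrightarrows U$ and $M_{i+1}, Z_{i+1}, P_{i+1}\in\mathcal{L}(U;U)$ with $Z_{i+1}M_{i+1}$ self-adjoint and $Z_{i+1}M_{i+1}\ge0$. Let $(u^i)_{i\in\mathbb{N}}\subset U$ satisfy $0\in\widetilde H_{i+1}(u^{i+1}) + M_{i+1}(u^{i+1}-u^i)$ for all $i$. Let $\delta\in[0,1]$ and suppose that for all $i$, $Z_{i+2}M_{i+2}\ge Z_{i+1}P_{i+1}$ and the partial error bound \[ \delta\|u^{i+1}-u^i\|^2_{Z_{i+1}M_{i+1}} + \operatorname{dist}^2_{Z_{i+2}M_{i+2}-Z_{i+1}P_{i+1}}(u^{i+1}, H^{-1}(0)) \ge \operatorname{dist}^2_{Z_{i+2}M_{i+2}}(u^{i+1},H^{-1}(0)) \] holds. Suppose further that for every $i$ there is $\Delta_{i+1}\in\mathbb{R}$ such that for all $u^*\in H^{-1}(0)$ and all $q\in\widetilde H_{i+1}(u^{i+1})$, \[ \tfrac{1-\delta}{2}\|u^{i+1}-u^i\|^2_{Z_{i+1}M_{i+1}} + \tfrac12\|u^{i+1}-u^*\|^2_{Z_{i+1}(M_{i+1}+P_{i+1})-Z_{i+2}M_{i+2}} + \langle q, u^{i+1}-u^*\rangle_{Z_{i+1}} \ge -\Delta_{i+1}. \] Then for all $N\ge1$, \[ \tfrac12 \operatorname{dist}^2_{Z_{N+1}M_{N+1}}(u^N,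 H^{-1}(0)) \le \tfrac12 \operatorname{dist}^2_{Z_1M_1}(u^0, H^{-1}(0)) + \sum_{i=0}^{N-1}\Delta_{i+1}. \]
   Context: For $T\in\mathcal{L}(U;U)$ (bounded linear, not necessarily self-adjoint): $\langle x,z\rangle_T:=\langle Tx,z\rangle$, $\|x\|_T^2:=\langle Tx,x\rangle$, $\operatorname{dist}_T^2(z,A):=\inf_{u\in A}\|z-u\|_T^2$; $T\ge S$ means $T-S$ positive semidefinite. $H^{-1}(0):=\{u: 0\in H(u)\}$. *)

From HB Require Import structures.
From mathcomp Require Import all_boot all_order all_algebra.
From mathcomp Require Import boolp classical_sets reals.
Set Implicit Arguments. Unset Strict Implicit. Unset Printing Implicit Defensive.
Import Order.TTheory GRing.Theory Num.Theory.
Local Open Scope ring_scope.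
Local Open Scope classical_set_scope.

Section Hilbert.
Variables (R : realType) (U : lmodType R) (ip : U -> U -> R).

Definition ipnorm (x : U) : R := Num.sqrt (ip x x).

Definition is_inner_product : Prop :=
  [/\ (forall x y, ip x y = ip y x),
      (forall a x y z, ip (a *: x + y) z = a * ip x z + ip y z),
      (forall x, 0 <= ip x x) &
      (forall x, ip x x = 0 -> x = 0)].

Definition ip_complete : Prop :=
  forall s : nat -> U,
    (forall e : R, 0 < e -> exists N : nat, forall m n : nat,
        (N <= m)%N -> (N <= n)%N -> ipnorm (s m - s n) < e) ->
    exists l : U, forall e : R, 0 < e -> exists N : nat, forall n : nat,
        (N <= n)%N -> ipnorm (s n - l) < e.

Definition Hilbert : Prop := is_inner_product /\ ip_complete.

Definition bounded_linear (T : U -> U) : Prop :=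
  (forall a x y, T (a *: x + y) = a *: T x + T y) /\
  exists C : R, forall x, ipnorm (T x) <= C * ipnorm x.

Definition self_adjoint (T : U -> U) : Prop := forall x y, ip (T x) y = ip x (T y).

Definition psd (T : U -> U) : Prop := forall x, 0 <= ip (T x) x.

Definition op_ge (T S : U -> U) : Prop := psd (fun x => T x - S x).

Definition ipT (T : U -> U) (x z : U) : R := ip (T x) z.
Definition normT2 (T : U -> U) (x : U) : R := ip (T x) x.

Definition distT2 (T : U -> U) (z : U) (A : set U) : R :=
  inf [set normT2 T (z - v) | v in A].

Definition zeros (H : U -> set U) : set U := [set v | H v 0].

End Hilbert.

Definition opcomp {R : realType} {U : lmodType R} (T S : U -> U) : U -> U :=
  fun x => T (S x).
Definition opadd {R : realType} {U : lmodType R} (T S : U -> U) : U -> U :=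
  fun x => T x + S x.
Definition opsub {R : realType} {U : lmodType R} (T S : U -> U) : U -> U :=
  fun x => T x - S x.

(** Testing the inclusion [0 \in Ht(u1) + M(u1 - u0)] against [Z(u1 - u* )] and expanding
    [|u0 - u*|^2_{ZM}] by the three-point identity (which needs [ZM] self-adjoint) turns the
    hypothesis on [Delta] into the descent inequality
    [|u1 - u*|^2_{Z'M' - ZP} + delta |u1 - u0|^2_{ZM} <= |u0 - u*|^2_{ZM} + 2 Delta]
    for every root [u*].  Taking the infimum over the roots and invoking the partial error
    bound gives [dist^2_{Z'M'}(u1) <= dist^2_{ZM}(u0) + 2 Delta]; summing these one-step
    estimates telescopes. *)
From HB Require Import structures.
From mathcomp Require Import all_boot all_order all_algebra.
From mathcomp Require Import boolp classical_sets reals.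
From mathcomp Require Import lra.
Set Implicit Arguments. Unset Strict Implicit. Unset Printing Implicit Defensive.
Import Order.TTheory GRing.Theory Num.Theory.
Local Open Scope ring_scope.

Lemma ler_telescope (R : numDomainType) (a b : nat -> R) :
  (forall i, a i.+1 <= a i + b i) -> forall n, a n <= a 0%N + \sum_(0 <= i < n) b i.
Proof.
move=> step; elim=> [|n IH]; first by rewrite big_geq // addr0.
by rewrite big_nat_recr //= addrA (le_trans (step n)) // lerD2r.
Qed.

Section Distance.
Variables (R : realType) (U : lmodType R) (ip : U -> U -> R).

Lemma distT2_le_normT2 (T : U -> U) (A : set U) z v :
  psd ip T -> A v -> distT2 ip T z A <= normT2 ip T (z - v).
Proof.
move=> T_psd Av; apply: ge_inf; last by exists v.
by exists 0 => _ [w _ <-]; exact: T_psd.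
Qed.

Lemma le_distT2 (T : U -> U) (A : set U) z r :
  (exists v, A v) -> (forall v, A v -> r <= normT2 ip T (z - v)) ->
  r <= distT2 ip T z A.
Proof.
move=> [v Av] lbT; apply: lb_le_inf; first by exists (normT2 ip T (z - v)), v.
by move=> _ [w Aw <-]; exact: lbT.
Qed.

End Distance.

Section InnerProduct.
Variables (R : realType) (U : lmodType R) (ip : U -> U -> R).
Hypothesis ip_inner : is_inner_product ip.

Lemma ipC x y : ip x y = ip y x.
Proof. by case: ip_inner. Qed.

Lemma ipDl x y z : ip (x + y) z = ip x z + ip y z.
Proof. by case: ip_inner => _ ipZD _ _; rewrite -[x]scale1r ipZD mul1r scale1r. Qed.

Lemma ipNl x z : ip (- x) z = - ip x z.
Proof. have := ipDl (- x) x z; have := ipDl 0 0 z; rewrite addNr addr0; lra. Qed.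

Lemma ipBl x y z : ip (x - y) z = ip x z - ip y z.
Proof. by rewrite ipDl ipNl. Qed.

Lemma ipBr x y z : ip z (x - y) = ip z x - ip z y.
Proof. by rewrite ipC ipBl ipC [ip y z]ipC. Qed.

Lemma normT2_opsub (A B : U -> U) x :
  normT2 ip (opsub A B) x = normT2 ip A x - normT2 ip B x.
Proof. exact: ipBl. Qed.

Section LinearOperator.
Variable T : U -> U.
Hypothesis T_linear : linear T.
HB.instance Definition _ := GRing.isLinear.Build R U U *:%R T T_linear.

Lemma normT2_opcomp_opadd (M P : U -> U) x :
  normT2 ip (opcomp T (opadd M P)) x
  = normT2 ip (opcomp T M) x + normT2 ip (opcomp T P) x.
Proof. by rewrite /normT2 /opcomp /opadd linearD ipDl. Qed.

Lemma normT2B x y : self_adjoint ip T ->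
  normT2 ip T (x - y) = normT2 ip T x - 2 * ip (T y) x + normT2 ip T y.
Proof.
move=> T_sa; rewrite /normT2 linearB !(ipBl, ipBr) [ip (T x) y]T_sa [ip x _]ipC.
lra.
Qed.

End LinearOperator.

Lemma opcomp_linear (Z M : U -> U) : linear Z -> linear M -> linear (opcomp Z M).
Proof. by move=> linZ linM a x y; rewrite /opcomp linM linZ. Qed.

Section ProximalStep.
Variables (Z M P Z' M' : U -> U) (delta Delta : R).
Hypotheses (Z_linear : linear Z) (M_linear : linear M).
Hypothesis ZM_sa : self_adjoint ip (opcomp Z M).
HB.instance Definition _ := GRing.isLinear.Build R U U *:%R Z Z_linear.

Definition step_bound (u0 u1 q ustar : U) : Prop :=
  (1 - delta) / 2 * normT2 ip (opcomp Z M) (u1 - u0)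
  + 1 / 2 * normT2 ip (opsub (opcomp Z (opadd M P)) (opcomp Z' M')) (u1 - ustar)
  + ipT ip Z q (u1 - ustar) >= - Delta.

Lemma proximal_step_descent u0 u1 q ustar :
  q + M (u1 - u0) = 0 -> step_bound u0 u1 q ustar ->
  normT2 ip (opsub (opcomp Z' M') (opcomp Z P)) (u1 - ustar)
  + delta * normT2 ip (opcomp Z M) (u1 - u0)
  <= normT2 ip (opcomp Z M) (u0 - ustar) + 2 * Delta.
Proof.
move=> /eqP; rewrite addr_eq0 => /eqP ->.
have -> : u0 - ustar = (u1 - ustar) - (u1 - u0) by rewrite opprB [RHS]addrC addrA subrK.
rewrite /step_bound (normT2B (opcomp_linear Z_linear M_linear) (u1 - ustar) (u1 - u0)) //.
rewrite !normT2_opsub normT2_opcomp_opadd // /ipT.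
have -> : Z (- M (u1 - u0)) = - opcomp Z M (u1 - u0) by rewrite /opcomp linearN.
rewrite ipNl; lra.
Qed.

Lemma proximal_step_dist_descent (S : set U) u0 u1 q :
  (exists v, S v) -> op_ge ip (opcomp Z' M') (opcomp Z P) ->
  q + M (u1 - u0) = 0 -> (forall ustar, S ustar -> step_bound u0 u1 q ustar) ->
  distT2 ip (opsub (opcomp Z' M') (opcomp Z P)) u1 S
  + delta * normT2 ip (opcomp Z M) (u1 - u0)
  <= distT2 ip (opcomp Z M) u0 S + 2 * Delta.
Proof.
move=> S_ne ge q_res bound; rewrite -lerBlDr; apply: le_distT2 => // v Sv.
have := distT2_le_normT2 u1 ge Sv.
have := proximal_step_descent q_res (bound v Sv); lra.
Qed.

End ProximalStep.

End InnerProduct.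

Theorem corollary3p11 (R : realType) (U : lmodType R) (ip : U -> U -> R)
  (H : U -> set U) (Ht : nat -> U -> set U) (M Z P : nat -> U -> U)
  (u : nat -> U) (delta : R) (Delta : nat -> R) :
  Hilbert ip ->
  (exists v, zeros H v) ->
  (forall i, bounded_linear ip (M i.+1) /\ bounded_linear ip (Z i.+1)
             /\ bounded_linear ip (P i.+1)) ->
  (forall i, self_adjoint ip (opcomp (Z i.+1) (M i.+1)) /\
             psd ip (opcomp (Z i.+1) (M i.+1))) ->
  (forall i, exists q, Ht i.+1 (u i.+1) q /\ q + M i.+1 (u i.+1 - u i) = 0) ->
  0 <= delta <= 1 ->
  (forall i, op_ge ip (opcomp (Z i.+2) (M i.+2)) (opcomp (Z i.+1) (P i.+1))) ->
  (forall i,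
     delta * normT2 ip (opcomp (Z i.+1) (M i.+1)) (u i.+1 - u i)
     + distT2 ip (opsub (opcomp (Z i.+2) (M i.+2)) (opcomp (Z i.+1) (P i.+1)))
              (u i.+1) (zeros H)
     >= distT2 ip (opcomp (Z i.+2) (M i.+2)) (u i.+1) (zeros H)) ->
  (forall i ustar q, zeros H ustar -> Ht i.+1 (u i.+1) q ->
     (1 - delta) / 2 * normT2 ip (opcomp (Z i.+1) (M i.+1)) (u i.+1 - u i)
     + 1 / 2 * normT2 ip
         (opsub (opcomp (Z i.+1) (opadd (M i.+1) (P i.+1))) (opcomp (Z i.+2) (M i.+2)))
         (u i.+1 - ustar)
     + ipT ip (Z i.+1) q (u i.+1 - ustar)
     >= - Delta i.+1) ->
  forall N : nat, (1 <= N)%N ->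
    1 / 2 * distT2 ip (opcomp (Z N.+1) (M N.+1)) (u N) (zeros H)
    <= 1 / 2 * distT2 ip (opcomp (Z 1%N) (M 1%N)) (u 0%N) (zeros H)
       + \sum_(0 <= i < N) Delta i.+1.
Proof.
move=> [ip_inner _] roots_ne lin sa incl _ ge error_bound bound N _.
pose D k := distT2 ip (opcomp (Z k.+1) (M k.+1)) (u k) (zeros H).
have step i : D i.+1 <= D i + 2 * Delta i.+1.
  have [q [Htq q_res]] := incl i.
  have [[M_linear _] [[Z_linear _] _]] := lin i.
  have := proximal_step_dist_descent ip_inner Z_linear M_linear (sa i).1 roots_ne
    (ge i) q_res (fun v rv => bound i v q rv Htq).
  have := error_bound i; rewrite /D; lra.
have := ler_telescope step N; rewrite -big_distrr /D /=; lra.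
Qed.
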